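(* Let $n\geq 5$ and let $G=C^2_n$. Then $G$ does not contain $W_6$ as a minor if and only if $5\leq n\leq 8$.
   Context: All graphs are finite and simple. For $n\geq 5$, $C^2_n$ is the graph obtained from a cycle $C_n$ by adding an edge between every pair of vertices at distance two on the cycle (it is $4$-connected). $W_6$ is the wheel obtained by joining a single new vertex to all vertices of a cycle of length $6$. A minor is obtained by a sequence of edge deletions and edge contractions (parallel edges arising from contractions are reduced to single edges). *)

From mathcomp Require Import all_boot.
Set Implicit Arguments. Unset Strict Implicit. Unset Printing Implicit Defensive.

(* A (labelled) graph living inside a finite type T: a vertex set V and an
   adjacency relation E (intended symmetric, irreflexive, supported on V). *)
Record sgraph (T : finType) := SGraph { gV : {set T}; gE : rel T }.

Definition is_simple (T : finType) (G : sgraph T) : Prop :=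
  (forall x y, gE G x y -> gE G y x) /\ (forall x, ~~ gE G x x) /\
  (forall x y, gE G x y -> (x \in gV G) && (y \in gV G)).

Definition del_edge (T : finType) (G : sgraph T) (a b : T) : sgraph T :=
  SGraph (gV G) (fun x y => gE G x y && ~~ (((x == a) && (y == b)) || ((x == b) && (y == a)))).

(* contract the edge ab: b is merged into a; parallel edges/loops are dropped *)
Definition contract_edge (T : finType) (G : sgraph T) (a b : T) : sgraph T :=
  let V' := gV G :\ b in
  SGraph V' (fun x y => [&& x \in V', y \in V', x != y &
                           [|| gE G x y, (x == a) && gE G b y | (y == a) && gE G x b]]).

Inductive minor_step (T : finType) : sgraph T -> sgraph T -> Prop :=
| MS_del (G : sgraph T) a b : gE G a b -> minor_step G (del_edge G a b)
| MS_contr (G : sgraph T) a b : gE G a b -> minor_step G (contract_edge G a b).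

Inductive minor_of (T : finType) : sgraph T -> sgraph T -> Prop :=
| MO_refl (G : sgraph T) : minor_of G G
| MO_step (G G1 G2 : sgraph T) : minor_step G G1 -> minor_of G1 G2 -> minor_of G G2.

Definition iso_to (U T : finType) (H : rel U) (G : sgraph T) : Prop :=
  exists f : U -> T, [/\ injective f, forall x, x \in gV G <-> exists u, f u = x
                       & forall u v, gE G (f u) (f v) = H u v].

Definition has_minor (U T : finType) (G : sgraph T) (H : rel U) : Prop :=
  exists G', minor_of G G' /\ iso_to H G'.

Definition C2_rel (n : nat) : rel 'I_n := fun i j =>
  (i != j) && [|| (i + 1) %% n == j, (i + 2) %% n == j, (j + 1) %% n == i | (j + 2) %% n == i].

Definition C2 (n : nat) : sgraph 'I_n := SGraph [set: 'I_n] (@C2_rel n).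

(* W_6 on 'I_7: hub 0, rim 1..6 forming the 6-cycle 1-2-3-4-5-6-1 *)
Definition W6_rel : rel 'I_7 := fun i j =>
  (i != j) && [|| (i == 0 :> nat), (j == 0 :> nat),
     ((0 < i) && (0 < j) && ((i %% 6).+1 == j)) | ((0 < i) && (0 < j) && ((j %% 6).+1 == i))].

From mathcomp Require Import all_boot zify.
From Stdlib Require Import FunctionalExtensionality.

Set Implicit Arguments. Unset Strict Implicit. Unset Printing Implicit Defensive.

(* Minors are described by branch maps: a minor of G on the vertex type of G is a spanning
   subgraph of the quotient of G by an idempotent map [phi] whose fibres (the branch sets)
   are connected; conversely every such subgraph arises by contracting the branch sets one
   edge at a time and then deleting edges.
   If C_n^2 had a W_6 minor, the branch set F of the hub would be connected and have at
   least six boundary vertices, so |F| + 6 <= n. For n <= 8 this forces |F| = 1, or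
   |F| = 2 and n = 8 with F an edge; but a vertex of C_n^2 has only four neighbours, and
   the ends of an edge of C_8^2 only five others. For n >= 9 the branch sets {0, 2, 4}
   (hub) and 1, 3, 5, {6, ..., n - 3}, n - 2, n - 1 (rim, in cyclic order) give a W_6
   minor. *)

(** * Minors and branch maps *)

Section Minors.
Variable T : finType.
Implicit Types (G H K : sgraph T) (V : {set T}) (E : rel T).

Definition spanning_subgraph G H : Prop := gV G = gV H /\ subrel (gE G) (gE H).

Lemma spanning_subgraph_trans G H K :
  spanning_subgraph G H -> spanning_subgraph H K -> spanning_subgraph G K.
Proof. by move=> [VGH GH] [VHK HK]; split=> [|x y /GH /HK]; rewrite ?VGH. Qed.

Lemma spanning_subgraph_del_edge G a b : spanning_subgraph (del_edge G a b) G.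
Proof. by split=> // x y /andP[]. Qed.

Lemma spanning_subgraph_contract G H a b : spanning_subgraph G H ->
  spanning_subgraph (contract_edge G a b) (contract_edge H a b).
Proof.
move=> [VGH GH]; split; first by rewrite /= VGH.
move=> x y /=; rewrite VGH => /and4P[-> -> -> /or3P[/GH|/andP[-> /GH]|/andP[-> /GH]] ->];
  by rewrite ?orbT.
Qed.

Lemma minor_trans G H K : minor_of G H -> minor_of H K -> minor_of G K.
Proof. by elim=> // {}G G1 {}H step _ IH /IH; apply: MO_step. Qed.

Definition missing_edges E E' : {set T * T} := [set p | E p.1 p.2 && ~~ E' p.1 p.2].

Lemma minor_of_spanning_subgraph V E E' : symmetric E -> symmetric E' ->
  subrel E' E -> minor_of (SGraph V E) (SGraph V E').
Proof.
move=> + E'_sym; move: {2}#|missing_edges E E'| (leqnn #|missing_edges E E'|) => k.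
elim: k E => [|k IH] E hk E_sym E'E.
  suff ->: E = E' by apply: MO_refl.
  apply: functional_extensionality => x; apply: functional_extensionality => y.
  apply/idP/idP => [Exy|/E'E //]; apply/negPn/negP => E'xy.
  by move: hk; rewrite leqn0 => /eqP/cards0_eq/setP/(_ (x, y)); rewrite !inE Exy E'xy.
have [D0|[[a b] abD]] := set_0Vmem (missing_edges E E').
  by apply: IH => //; rewrite D0 cards0.
move: (abD); rewrite inE /= => /andP[Eab E'ab].
apply: MO_step (MS_del (G := SGraph V E) Eab) _; apply: IH => /=.
- rewrite -ltnS; apply: leq_trans _ hk.
  rewrite [X in _ < X](cardsD1 (a, b)) abD ltnS subset_leq_card //.
  apply/subsetP=> -[x y]; rewrite !inE /= => /andP[/andP[Exy]].
  by rewrite negb_or => /andP[nab _] ->; rewrite andbT xpair_eqE nab.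
- by move=> x y; rewrite E_sym; case: (x == a); case: (y == b); case: (x == b); case: (y == a).
- move=> x y E'xy; rewrite E'E //=; apply/negP => /orP[] /andP[/eqP xa /eqP yb].
    by rewrite -xa -yb E'xy in E'ab.
  by rewrite -xa -yb E'_sym E'xy in E'ab.
Qed.

End Minors.

Section BranchSets.
Variables (T : finType) (E : rel T).
Implicit Types (A B S : {set T}) (phi psi : T -> T) (G : sgraph T).

Definition induced A : rel T := fun x y => [&& E x y, x \in A & y \in A].

Definition connected_set A : Prop := {in A &, forall x y, connect (induced A) x y}.

Definition boundary A : {set T} := [set y | (y \notin A) && [exists x in A, E x y]].

Definition fiber phi (x : T) : {set T} := [set u | phi u == x].

Definition branch_map phi : Prop :=
  idempotent_fun phi /\ forall x, connected_set (fiber phi x).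

Definition quotient_graph phi : sgraph T :=
  SGraph [set x | phi x == x]
    (fun x y => (x != y) && [exists u, exists v, [&& phi u == x, phi v == y & E u v]]).

Definition has_branch_map G : Prop :=
  exists2 phi, branch_map phi & spanning_subgraph G (quotient_graph phi).

Definition merge (a b x : T) : T := if x == b then a else x.

Lemma connect_induced_exit A S x y : connect (induced A) x y -> x \in S -> y \notin S ->
  exists u v, [/\ u \in A :&: S, v \in A :\: S & E u v].
Proof.
case/connectP=> p; elim: p x => [|z p IHp] x /=; first by move=> _ -> ->.
case/andP=> /and3P[Exz xA zA] pz yp xS; have [zS|zNS] := boolP (z \in S).
  exact: IHp pz yp zS.
by exists x, z; rewrite !inE xA xS zA zNS.
Qed.

Lemma connect_inducedS A B : A \subset B -> subrel (connect (induced A)) (connect (induced B)).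
Proof.
move=> /subsetP AB; apply: connect_sub => x y /and3P[Exy xA yA].
by apply: connect1; rewrite /induced Exy !AB.
Qed.

Lemma card_boundary A : #|A| + #|boundary A| <= #|T|.
Proof.
rewrite -(cardsC A) leq_add2l; apply/subset_leq_card/subsetP => y.
by rewrite !inE => /andP[].
Qed.

Lemma boundary_set1 x : boundary [set x] \subset [set y | E x y].
Proof.
apply/subsetP => y; rewrite !inE => /andP[_ /existsP[z]].
by rewrite inE => /andP[/eqP->].
Qed.

Lemma boundary_set2 x y :
  boundary [set x; y] \subset [set v | (E x v || E y v) && (v != x) && (v != y)].
Proof.
apply/subsetP => v; rewrite !inE negb_or => /andP[/andP[-> ->] /existsP[z]].
by rewrite !inE andbT => /andP[/orP[] /eqP-> ->]; rewrite ?orbT.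
Qed.

Lemma quotient_edgeP phi x y :
  reflect (exists u v, [/\ x != y, phi u = x, phi v = y & E u v])
          (gE (quotient_graph phi) x y).
Proof.
apply: (iffP andP) => [[xy /existsP[u /existsP[v /and3P[/eqP ux /eqP vy Euv]]]]|].
  by exists u, v.
move=> [u [v [xy ux vy Euv]]]; split=> //.
by apply/existsP; exists u; apply/existsP; exists v; rewrite ux vy !eqxx.
Qed.

Lemma quotient_edge_fixed phi x y : idempotent_fun phi -> gE (quotient_graph phi) x y ->
  [/\ x != y, phi x = x & phi y = y].
Proof.
move=> idem /quotient_edgeP[u [v [xy ux vy _]]]; subst x y.
by split; [|exact: idem|exact: idem].
Qed.

Lemma merge_comp_idem phi a b : idempotent_fun phi -> phi a = a -> a != b ->
  idempotent_fun (merge a b \o phi).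
Proof.
move=> idem fa ab x /=; rewrite /merge; have [xb|xb] := boolP (phi x == b).
  by rewrite fa (negbTE ab).
by rewrite (idem x : phi (phi x) = _) (negbTE xb).
Qed.

Lemma merge_comp_fixed phi a b : phi a = a -> a != b ->
  [set x | merge a b (phi x) == x] = [set x | phi x == x] :\ b.
Proof.
move=> fa ab; apply/setP => x; rewrite !inE /merge; have [pxb|pxb] := eqVneq (phi x) b.
  rewrite pxb [b == x]eq_sym andNb; apply/eqP => ax.
  by rewrite -ax fa in pxb; rewrite pxb eqxx in ab.
have [pxx|_] := eqVneq (phi x) x; last by rewrite andbF.
by rewrite andbT; rewrite pxx in pxb.
Qed.

Lemma contract_quotient_graph phi a b : idempotent_fun phi -> gE (quotient_graph phi) a b ->
  contract_edge (quotient_graph phi) a b = quotient_graph (merge a b \o phi).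
Proof.
move=> idem Qab; have [ab fa fb] := quotient_edge_fixed idem Qab.
rewrite /contract_edge /= -(merge_comp_fixed fa ab); congr SGraph.
apply: functional_extensionality => x; apply: functional_extensionality => y.
have fixed w : merge a b (phi w) \in [set x | merge a b (phi x) == x].
  by rewrite inE; apply/eqP; exact: (merge_comp_idem idem fa ab w).
apply/idP/quotient_edgeP => [|[u [v [xy /= ux vy Euv]]]].
  rewrite (merge_comp_fixed fa ab) !inE => /and4P[/andP[xb _] /andP[yb _] xy].
  case/or3P=> [/quotient_edgeP[u [v [_ ux vy Euv]]]
              |/andP[/eqP xa /quotient_edgeP[u [v [_ ub vy Euv]]]]
              |/andP[/eqP ya /quotient_edgeP[u [v [_ ux vb Euv]]]]];
    by exists u, v; rewrite /= /merge ?ux ?vy ?ub ?vb ?eqxx ?(negbTE xb) ?(negbTE yb).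
subst x y; rewrite !fixed xy /=; rewrite /merge in xy *.
have [ub|ub] := eqVneq (phi u) b; have [vb|vb] := eqVneq (phi v) b.
- by rewrite ub vb eqxx in xy.
- apply/orP; right; apply/orP; left; rewrite eqxx /=; apply/quotient_edgeP.
  by exists u, v; split; rewrite // eq_sym.
- apply/orP; right; apply/orP; right; rewrite eqxx /=; apply/quotient_edgeP.
  by exists u, v.
- by apply/orP; left; apply/existsP; exists u; apply/existsP; exists v; rewrite !eqxx.
Qed.

Lemma exists_contractible_edge phi psi b : branch_map phi -> idempotent_fun psi ->
    (forall x, psi x = x \/ psi x = phi x) -> psi b != phi b ->
  exists y, [/\ psi y = y, phi y != y & gE (quotient_graph psi) (phi y) y].
Proof.
move=> [idem conn] _ part nb; set r := phi b.
have psib : psi b = b by case: (part b) => // pb; rewrite pb eqxx in nb.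
have phir : phi r = r := idem b.
have psir : psi r = r by case: (part r) => ->.
have rF : r \in fiber phi r by rewrite inE phir.
have bF : b \in fiber phi r by rewrite inE.
have rS : r \in fiber psi r by rewrite inE psir.
have bS : b \notin fiber psi r by rewrite inE psib; rewrite psib in nb.
have [x [y [/setIP[xF xS] /setDP[yF yS] Exy]]] :=
  connect_induced_exit (conn r r b rF bF) rS bS.
rewrite !inE in xF xS yF yS; move/eqP: yF => phiy.
have psiy : psi y = y by case: (part y) => // psiy; rewrite psiy phiy eqxx in yS.
exists y; split=> //; first by rewrite phiy eq_sym -psiy.
by apply/quotient_edgeP; exists x, y; rewrite phiy (eqP xS); split=> //; rewrite -psiy eq_sym.
Qed.

Lemma card_nbr_le_boundary phi G x : spanning_subgraph G (quotient_graph phi) ->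
  #|[set y | gE G x y]| <= #|boundary (fiber phi x)|.
Proof.
move=> [_ GQ]; apply: leq_trans (leq_imset_card phi _); apply/subset_leq_card/subsetP => y.
rewrite inE => /GQ/quotient_edgeP[u [v [xy ux vy Euv]]]; apply/imsetP; exists v => //.
by rewrite !inE vy eq_sym xy; apply/existsP; exists u; rewrite inE ux eqxx.
Qed.

Hypothesis E_irr : irreflexive E.

Lemma quotient_graph_id : quotient_graph id = SGraph setT E.
Proof.
congr SGraph; first by apply/setP => x; rewrite !inE eqxx.
apply: functional_extensionality => x; apply: functional_extensionality => y.
apply/quotient_edgeP/idP => [[u [v [_ <- <- //]]]|Exy].
by exists x, y; split=> //; apply: contraTneq Exy => ->; rewrite E_irr.
Qed.

(* The branch sets of [psi] grow towards those of [phi], one contraction at a time. *)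
Lemma minor_of_quotient_graph phi : branch_map phi ->
  minor_of (SGraph setT E) (quotient_graph phi).
Proof.
move=> bphi; rewrite -quotient_graph_id.
suff: forall k psi, #|[set x | psi x != phi x]| <= k -> idempotent_fun psi ->
    (forall x, psi x = x \/ psi x = phi x) -> minor_of (quotient_graph psi) (quotient_graph phi).
  by apply=> // x; left.
have psi_cases psi : psi = phi \/ exists b, psi b != phi b.
  case: (pickP [pred x | psi x != phi x]) => [b nb|none]; first by right; exists b.
  by left; apply: functional_extensionality => x; move: (none x) => /= /negbFE/eqP.
elim=> [|k IH] psi hk idem part; have [->|[b nb]] := psi_cases psi; try exact: MO_refl.
  by move: hk; rewrite leqn0 => /eqP/cards0_eq/setP/(_ b); rewrite !inE nb.
have [y [psiy phiy Qy]] := exists_contractible_edge bphi idem part nb.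
have [_ psi_phiy _] := quotient_edge_fixed idem Qy.
have psi_eq_y x : psi x = y -> x = y.
  case: (part x) => [->//|-> phix]; move: phiy.
  by rewrite -phix (bphi.1 x : phi (phi x) = _) eqxx.
apply: MO_step (MS_contr Qy) _; rewrite contract_quotient_graph //.
apply: IH.
- rewrite -ltnS; apply: leq_trans hk.
  rewrite [X in _ < X](cardsD1 y) inE psiy eq_sym phiy add1n ltnS.
  apply/subset_leq_card/subsetP => x; rewrite !inE /merge /=.
  have [/psi_eq_y->|pxy] := eqVneq (psi x) y; first by rewrite eqxx.
  by move=> ->; rewrite andbT; apply: contra_neq pxy => ->.
- exact: merge_comp_idem.
- move=> x; rewrite /merge /=; have [/psi_eq_y->|_] := eqVneq (psi x) y; first by right.
  exact: part.
Qed.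

Hypothesis E_sym : symmetric E.

Lemma connect_induced_sym A : connect_sym (induced A).
Proof.
apply: sym_connect_sym => x y; rewrite /induced E_sym.
by case: (x \in A); case: (y \in A); rewrite ?andbF.
Qed.

Lemma connected_setU A B u v : connected_set A -> connected_set B ->
  u \in A -> v \in B -> E u v -> connected_set (A :|: B).
Proof.
move=> cA cB uA vB Euv.
have lA := connect_inducedS (subsetUl A B); have lB := connect_inducedS (subsetUr A B).
have cAB : {in A & B, forall x y, connect (induced (A :|: B)) x y}.
  move=> x y xA yB; apply: connect_trans (lA _ _ (cA x u xA uA)) _.
  apply: connect_trans (lB _ _ (cB v y vB yB)).
  by apply: connect1; rewrite /induced Euv !inE uA vB orbT.
move=> x y; rewrite !inE => /orP[xA|xB] /orP[yA|yB].
- exact/lA/cA.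
- exact: cAB.
- by rewrite connect_induced_sym; apply: cAB.
- exact/lB/cB.
Qed.

Lemma branch_map_to_rep phi : idempotent_fun phi ->
  (forall u, connect (induced (fiber phi (phi u))) u (phi u)) -> branch_map phi.
Proof.
move=> idem to_rep; split=> // x u v; rewrite !inE => /eqP ux /eqP vx.
have := to_rep v; rewrite vx connect_induced_sym => xv.
by apply: connect_trans xv; have := to_rep u; rewrite ux.
Qed.

Lemma branch_map_merge phi a b : branch_map phi -> gE (quotient_graph phi) a b ->
  branch_map (merge a b \o phi).
Proof.
move=> [idem conn] Qab; have [ab fa _] := quotient_edge_fixed idem Qab.
case/quotient_edgeP: Qab => u [v [_ ua vb Euv]].
split=> [|x]; first exact: merge_comp_idem.
have [->|xa] := eqVneq x a.
  have ->: fiber (merge a b \o phi) a = fiber phi a :|: fiber phi b.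
    apply/setP => w; rewrite !inE /merge /=.
    by have [->|_] := eqVneq (phi w) b; rewrite ?eqxx ?orbT ?orbF.
  by apply: connected_setU (conn a) (conn b) _ _ Euv; rewrite inE ?ua ?vb.
have [->|xb] := eqVneq x b.
  have ->: fiber (merge a b \o phi) b = set0.
    apply/setP => w; rewrite !inE /merge /=.
    by case: ifP => [_|/negbT pwb]; apply: negbTE.
  by move=> w; rewrite inE.
have ->: fiber (merge a b \o phi) x = fiber phi x.
  apply/setP => w; rewrite !inE /merge /=; have [->|//] := eqVneq (phi w) b.
  by rewrite eq_sym (negbTE xa) eq_sym (negbTE xb).
exact: conn.
Qed.

Lemma quotient_graph_sym phi : symmetric (gE (quotient_graph phi)).
Proof.
move=> x y; apply/quotient_edgeP/quotient_edgeP => -[u [v [xy ux vy Euv]]];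
  by exists v, u; split; rewrite // (eq_sym, E_sym).
Qed.

Lemma minor_step_branch_map G G' : minor_step G G' -> has_branch_map G -> has_branch_map G'.
Proof.
case=> {G G'} G0 a b Gab [phi bphi GQ].
  by exists phi => //; apply: spanning_subgraph_trans (spanning_subgraph_del_edge _ _ _) GQ.
have Qab := GQ.2 _ _ Gab.
exists (merge a b \o phi); first exact: branch_map_merge.
by rewrite -contract_quotient_graph //; [apply: spanning_subgraph_contract | case: bphi].
Qed.

Lemma minor_branch_map G G' : minor_of G G' -> has_branch_map G -> has_branch_map G'.
Proof. by elim=> // {}G G1 {}G' step _ IH /(minor_step_branch_map step). Qed.

Lemma minor_of_branch_map phi G : branch_map phi ->
  spanning_subgraph G (quotient_graph phi) -> symmetric (gE G) -> minor_of (SGraph setT E) G.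
Proof.
move=> bphi GQ G_sym; apply: minor_trans (minor_of_quotient_graph bphi) _.
case: G GQ G_sym => V E' [/= -> E'Q] E'_sym.
exact: minor_of_spanning_subgraph (@quotient_graph_sym phi) E'_sym E'Q.
Qed.

Lemma has_minor_boundary (U : finType) (H : rel U) (w : U) : has_minor (SGraph setT E) H ->
  exists F, [/\ F != set0, connected_set F & #|[set u | H w u]| <= #|boundary F|].
Proof.
move=> [G [/minor_branch_map GM [f [f_inj fV fE]]]].
have [|phi [idem conn] [VG GQ]] := GM.
  exists id; last by rewrite quotient_graph_id; split.
  by split=> [//|x u v]; rewrite !inE => /eqP-> /eqP->.
exists (fiber phi (f w)); split=> //.
  apply/set0Pn; exists (f w); have : f w \in gV G by apply/fV; exists w.
  by rewrite VG !inE.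
apply: leq_trans (card_nbr_le_boundary (f w) (conj VG GQ)).
rewrite -(card_imset _ f_inj); apply/subset_leq_card/subsetP => y /imsetP[u].
by rewrite inE => Hwu ->; rewrite inE fE.
Qed.

End BranchSets.

Section ImageGraph.
Variables (U T : finType) (f : U -> T) (H : rel U).

Definition image_graph : sgraph T :=
  SGraph (f @: setT) (fun x y => [exists u, exists v, [&& f u == x, f v == y & H u v]]).

Lemma image_graph_sym : symmetric H -> symmetric (gE image_graph).
Proof.
move=> H_sym x y; apply/existsP/existsP => -[u /existsP[v /and3P[ux vy Huv]]];
  by exists v; apply/existsP; exists u; rewrite ux vy H_sym.
Qed.

Lemma iso_to_image_graph : injective f -> iso_to H image_graph.
Proof.
move=> f_inj; exists f; split=> // [x|u v].
  by split=> [/imsetP[u _ ->]|[u <-]]; [exists u | apply: imset_f; rewrite inE].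
apply/existsP/idP => [[u' /existsP[v' /and3P[/eqP/f_inj-> /eqP/f_inj-> //]]]|Huv].
by exists u; apply/existsP; exists v; rewrite !eqxx.
Qed.

End ImageGraph.

(** * No W_6 minor in C_n^2 for n <= 8 *)

Lemma C2_sym n : symmetric (@C2_rel n).
Proof.
move=> x y; rewrite /C2_rel eq_sym; congr (_ && _).
by case: ((x + 1) %% n == y); case: ((x + 2) %% n == y);
  case: ((y + 1) %% n == x); case: ((y + 2) %% n == x); rewrite ?orbT.
Qed.

Lemma C2_irr n : irreflexive (@C2_rel n).
Proof. by move=> x; rewrite /C2_rel eqxx. Qed.

Lemma card_C2_nbr n (u : 'I_n) : #|[set v | C2_rel u v]| <= 4.
Proof.
have card_fiber (g : 'I_n -> nat) a : injective g -> #|[set v | g v == a]| <= 1.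
  move=> g_inj; apply/card_le1_eqP => v w; rewrite !inE => /eqP gv /eqP gw.
  by apply: g_inj; rewrite gv gw.
have shift_inj k : injective (fun v : 'I_n => (v + k) %% n).
  by move=> v w /eqP; rewrite eqn_modDr !modn_small // => /eqP; apply: val_inj.
have sub : [set v | C2_rel u v] \subset
    [set v : 'I_n | val v == (u + 1) %% n] :|: [set v : 'I_n | val v == (u + 2) %% n] :|:
    [set v : 'I_n | (v + 1) %% n == u] :|: [set v : 'I_n | (v + 2) %% n == u].
  apply/subsetP => v; rewrite !inE /C2_rel => /andP[_].
  by rewrite ![val v == _]eq_sym -!orbA.
apply: leq_trans (subset_leq_card sub) _.
apply: leq_trans (leq_card_setU _ _) (@leq_add _ _ 3 1 _ (card_fiber _ _ (shift_inj 2))).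
apply: leq_trans (leq_card_setU _ _) (@leq_add _ _ 2 1 _ (card_fiber _ _ (shift_inj 1))).
exact: leq_trans (leq_card_setU _ _) (leq_add (card_fiber _ _ val_inj) (card_fiber _ _ val_inj)).
Qed.

(* [C2_rel] on [nat], so that finite checks can run by computation over [iota]. *)
Definition C2_adj (n i j : nat) : bool :=
  (i != j) && [|| (i + 1) %% n == j, (i + 2) %% n == j, (j + 1) %% n == i | (j + 2) %% n == i].

Lemma card_ord_set_count n (P : pred nat) : #|[set v : 'I_n | P v]| = count P (iota 0 n).
Proof.
rewrite cardE /enum_mem size_filter -enumT -val_enum_ord count_map.
by apply: eq_count => v; rewrite /= inE.
Qed.

Lemma card_C2_8_edge_nbr (x y : 'I_8) : C2_rel x y ->
  #|[set v | (C2_rel x v || C2_rel y v) && (v != x) && (v != y)]| <= 5.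
Proof.
pose nbr2 i j k := (C2_adj 8 i k || C2_adj 8 j k) && (k != i) && (k != j).
have: all (fun i => all (fun j => C2_adj 8 i j ==> (count (nbr2 i j) (iota 0 8) <= 5))
                        (iota 0 8)) (iota 0 8) by [].
move=> /allP/(_ x)/[!mem_iota]/(_ (ltn_ord x))/allP/(_ y)/[!mem_iota]/(_ (ltn_ord y))/implyP.
by rewrite -card_ord_set_count; apply.
Qed.

Lemma C2_boundary_lt6 n (F : {set 'I_n}) : n <= 8 -> F != set0 ->
  connected_set (@C2_rel n) F -> #|boundary (@C2_rel n) F| < 6.
Proof.
move=> n_le8 F0 cF; rewrite ltnNge; apply/negP => bF6.
have cardFB : #|F| + #|boundary (@C2_rel n) F| <= n.
  by rewrite -[n in _ <= n]card_ord card_boundary.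
have /orP[/cards1P[x Fx]|/cards2P[x [y [xy Fxy]]]] : (#|F| == 1) || (#|F| == 2).
  by move: F0; rewrite -card_gt0; lia.
- have := leq_trans (subset_leq_card (boundary_set1 _ x)) (card_C2_nbr x).
  by rewrite -Fx => /(leq_trans bF6).
- have n8 : n = 8 by move: cardFB; rewrite [in #|F|]Fxy cards2 xy; lia.
  subst n.
  have xF : x \in F by rewrite Fxy set21.
  have yF : y \in F by rewrite Fxy set22.
  have yNx : y \notin [set x] by rewrite inE eq_sym.
  have [_ [v [/setIP[_ /set1P->] /setDP[vF vNx] Exv]]] :=
    connect_induced_exit (cF x y xF yF) (set11 x) yNx.
  have vy : v = y by move: vF vNx; rewrite Fxy !inE => /orP[->|/eqP].
  rewrite {}vy in Exv.
  have := leq_trans (subset_leq_card (boundary_set2 _ x y)) (card_C2_8_edge_nbr Exv).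
  by rewrite -Fxy => /(leq_trans bF6).
Qed.

Lemma W6_sym : symmetric W6_rel.
Proof. by move=> [[|[|[|[|[|[|[|?]]]]]]] ?] [[|[|[|[|[|[|[|?]]]]]]] ?]. Qed.

Lemma W6_hub_nbr : [set u | W6_rel ord0 u] = [set~ ord0].
Proof. by apply/setP => -[[|[|[|[|[|[|[|?]]]]]]] ?]; rewrite !inE. Qed.

Lemma C2_no_W6_minor n : n <= 8 -> ~ has_minor (C2 n) W6_rel.
Proof.
move=> n_le8 /(has_minor_boundary (@C2_irr n) (@C2_sym n) ord0) [F [F0 cF]].
rewrite W6_hub_nbr cardsC1 card_ord => /leq_ltn_trans/(_ (C2_boundary_lt6 n_le8 F0 cF)).
by [].
Qed.

(** * A W_6 minor of C_n^2 for n >= 9 *)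

Definition cyclic_near (n i j : nat) : bool :=
  [|| i + 1 == j, i + 2 == j, i + 1 == j + n, i + 2 == j + n,
      j + 1 == i, j + 2 == i, j + 1 == i + n | j + 2 == i + n].

Lemma C2_rel_near n (u v : 'I_n) : 2 < n -> cyclic_near n u v -> C2_rel u v.
Proof.
move=> n_gt2 near; have lt_u := ltn_ord u; have lt_v := ltn_ord v.
have modE k z : z < n -> (k == z) || (k == z + n) -> k %% n == z.
  by move=> lt_z /orP[] /eqP->; rewrite ?modnDr modn_small.
apply/andP; split; first by apply/eqP => uv; move: near; rewrite /cyclic_near uv; lia.
apply/or4P.
have [/(modE _ _ lt_v) e|h1] := boolP ((u + 1 == v) || (u + 1 == v + n)); first exact: Or41.
have [/(modE _ _ lt_v) e|h2] := boolP ((u + 2 == v) || (u + 2 == v + n)); first exact: Or42.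
have [/(modE _ _ lt_u) e|h3] := boolP ((v + 1 == u) || (v + 1 == u + n)); first exact: Or43.
have [/(modE _ _ lt_u) e|h4] := boolP ((v + 2 == u) || (v + 2 == u + n)); first exact: Or44.
by move: near; rewrite /cyclic_near; lia.
Qed.

Section W6Model.
Variable m : nat.
Hypothesis m_ge8 : 8 <= m.

Lemma C2_inord (p q : nat) : p <= m -> q <= m -> cyclic_near m.+1 p q ->
  C2_rel (inord p : 'I_m.+1) (inord q).
Proof. by move=> lt_p lt_q near; apply: C2_rel_near; rewrite ?inordK //; lia. Qed.

Lemma connect_C2_block (A : {set 'I_m.+1}) (a k : nat) : a <= k <= m ->
    (forall i, a <= i <= k -> inord i \in A) ->
  connect (induced (@C2_rel m.+1) A) (inord k) (inord a).
Proof.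
elim: k => [|k IH] a_k inA; first by have -> : a = 0 by lia.
have [-> //|a_le_k] := eqVneq a k.+1.
apply: connect_trans (IH _ _); [apply: connect1 | lia | move=> i ?; apply: inA; lia].
by rewrite /induced C2_inord ?inA //= /cyclic_near; lia.
Qed.

Definition w6_branch (i : nat) : nat :=
  if (i == 2) || (i == 4) then 0 else if 7 <= i <= m - 2 then 6 else i.

Lemma w6_branch_le i : w6_branch i <= i.
Proof. by rewrite /w6_branch; case: ifP => _ //; case: ifP => h; lia. Qed.

Definition w6_model (u : 'I_m.+1) : 'I_m.+1 :=
  Ordinal (leq_ltn_trans (w6_branch_le u) (ltn_ord u)).

Definition w6_label (i : nat) : nat :=
  match i with 0 => 0 | 1 => 1 | 2 => 3 | 3 => 5 | 4 => 6 | 5 => m - 1 | _ => m end.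

Lemma w6_label_lt i : w6_label i < m.+1.
Proof. by case: i => [|[|[|[|[|[|i]]]]]] /=; lia. Qed.

Definition w6_embed (i : 'I_7) : 'I_m.+1 := Ordinal (w6_label_lt i).

Local Ltac w6_lia :=
  try rewrite /w6_branch; try rewrite /cyclic_near; rewrite /=; repeat (case: ifP => ?); lia.

Lemma w6_model_inord i : i <= m -> w6_model (inord i) = inord (w6_branch i).
Proof.
move=> le_i; apply: val_inj; rewrite /= !inordK //.
exact: leq_ltn_trans (w6_branch_le i) _.
Qed.

Lemma w6_model_idem : idempotent_fun w6_model.
Proof.
move=> u; apply: val_inj => /=; rewrite [w6_branch u]/w6_branch.
case: ifP => // h1; case: ifP => // h2.
by rewrite /w6_branch h1 h2.
Qed.

Lemma w6_model_connect i : i <= m ->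
  connect (induced (@C2_rel m.+1) (fiber w6_model (inord (w6_branch i))))
          (inord i) (inord (w6_branch i)).
Proof.
move=> le_i; set F := fiber _ _.
have inF j : j <= m -> w6_branch j = w6_branch i -> inord j \in F.
  by move=> le_j bj; rewrite inE w6_model_inord // bj.
have [i24|n24] := boolP ((i == 2) || (i == 4)).
  have b0 : w6_branch i = 0 by rewrite /w6_branch i24.
  have step j k : j <= 4 -> k <= 4 -> w6_branch j = 0 -> w6_branch k = 0 ->
      cyclic_near m.+1 j k -> connect (induced (@C2_rel m.+1) F) (inord j) (inord k).
    move=> le_j le_k bj bk near; apply: connect1.
    by rewrite /induced C2_inord ?inF ?bj ?bk //; lia.
  rewrite b0; case/orP: i24 => /eqP->; first by apply: step => //; rewrite /cyclic_near; lia.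
  by apply: (@connect_trans _ _ (inord 2)); apply: step => //; rewrite /cyclic_near; lia.
have [blk|nblk] := boolP (7 <= i <= m - 2).
  have b6 : w6_branch i = 6 by rewrite /w6_branch (negbTE n24) blk.
  rewrite b6; apply: connect_C2_block => [|j j_blk]; first lia.
  by apply: inF; [lia | rewrite b6; w6_lia].
by rewrite /w6_branch (negbTE n24) (negbTE nblk).
Qed.

Lemma branch_map_w6_model : branch_map (@C2_rel m.+1) w6_model.
Proof.
apply: (branch_map_to_rep (@C2_sym m.+1) w6_model_idem) => u.
by rewrite -(inord_val u) w6_model_inord ?w6_model_connect // -ltnS.
Qed.

Lemma w6_embed_inj : injective w6_embed.
Proof.
move=> i j /(congr1 val) /= eq_ij; apply: val_inj; move: i j eq_ij.
by move=> [[|[|[|[|[|[|[|?]]]]]]] ?] [[|[|[|[|[|[|[|?]]]]]]] ?] /=; lia.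
Qed.

Lemma w6_model_fixed : [set x | w6_model x == x] = w6_embed @: setT.
Proof.
apply/setP => x; rewrite inE; apply/eqP/imsetP => [/(congr1 val) /= bx|[i _ ->]].
  have [i lt_i ix] : exists2 i, i < 7 & w6_label i = x.
    have : x = 0 :> nat \/ x = 1 :> nat \/ x = 3 :> nat \/ x = 5 :> nat \/ x = 6 :> nat \/
           x = m - 1 :> nat \/ x = m :> nat.
      move: bx; have := ltn_ord x; rewrite /w6_branch.
      by case: ifP => ? ?; last case: ifP => ?; lia.
    by case=> [|[|[|[|[|[|]]]]]] ->;
      [exists 0|exists 1|exists 2|exists 3|exists 4|exists 5|exists 6].
  by exists (Ordinal lt_i) => //; apply: val_inj.
apply: val_inj => /=; case: i => [[|[|[|[|[|[|[|?]]]]]]] ?] //=; w6_lia.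
Qed.

Lemma w6_quotient_edge (i j : 'I_7) (p q : nat) : p <= m -> q <= m ->
    w6_branch p = w6_label i -> w6_branch q = w6_label j -> w6_label i != w6_label j ->
    cyclic_near m.+1 p q ->
  gE (quotient_graph (@C2_rel m.+1) w6_model) (w6_embed i) (w6_embed j).
Proof.
move=> le_p le_q bp bq ij near; apply/quotient_edgeP; exists (inord p), (inord q).
split; [by rewrite -val_eqE | | | exact: C2_inord];
  by apply: ord_inj; rewrite w6_model_inord //= inordK // (leq_ltn_trans (w6_branch_le _)).
Qed.

Lemma w6_embed_edge i j : W6_rel i j ->
  gE (quotient_graph (@C2_rel m.+1) w6_model) (w6_embed i) (w6_embed j).
Proof.
wlog lt_ij : i j / i < j.
  move=> key Wij; case: (ltngtP i j) => [lt_ij|gt_ij|/val_inj eq_ij]; first exact: key.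
    by rewrite quotient_graph_sym; [apply: key; rewrite // W6_sym | exact: C2_sym].
  by move: Wij; rewrite eq_ij /W6_rel eqxx.
case: i j lt_ij => [[|[|[|[|[|[|[|?]]]]]]] ?] [[|[|[|[|[|[|[|?]]]]]]] ?];
  rewrite [_ < _]/= [W6_rel _ _]/= // => _ _.
- by apply: (w6_quotient_edge (p := 0) (q := 1)); w6_lia.
- by apply: (w6_quotient_edge (p := 2) (q := 3)); w6_lia.
- by apply: (w6_quotient_edge (p := 4) (q := 5)); w6_lia.
- by apply: (w6_quotient_edge (p := 4) (q := 6)); w6_lia.
- by apply: (w6_quotient_edge (p := 0) (q := m - 1)); w6_lia.
- by apply: (w6_quotient_edge (p := 0) (q := m)); w6_lia.
- by apply: (w6_quotient_edge (p := 1) (q := 3)); w6_lia.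
- by apply: (w6_quotient_edge (p := 1) (q := m)); w6_lia.
- by apply: (w6_quotient_edge (p := 3) (q := 5)); w6_lia.
- by apply: (w6_quotient_edge (p := 5) (q := 6)); w6_lia.
- by apply: (w6_quotient_edge (p := m - 2) (q := m - 1)); w6_lia.
- by apply: (w6_quotient_edge (p := m - 1) (q := m)); w6_lia.
Qed.

Lemma C2_W6_minor : has_minor (C2 m.+1) W6_rel.
Proof.
exists (image_graph w6_embed W6_rel); split; last exact: iso_to_image_graph w6_embed_inj.
apply: (minor_of_branch_map (@C2_irr _) (@C2_sym _) branch_map_w6_model);
  last exact: image_graph_sym W6_sym.
split=> [|x y /existsP[i /existsP[j /and3P[/eqP<- /eqP<-]]]]; last exact: w6_embed_edge.
by rewrite /= w6_model_fixed.
Qed.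

End W6Model.

Unset Implicit Arguments.

Theorem lemma3p4 (n : nat) : 5 <= n ->
  (~ has_minor (C2 n) W6_rel <-> (5 <= n <= 8)).
Proof.
move=> n_ge5; rewrite n_ge5; split=> [no_minor|]; last exact: C2_no_W6_minor.
rewrite leqNgt; apply/negP => n_gt8; apply: no_minor.
have -> : n = n.-1.+1 by lia.
by apply: C2_W6_minor; lia.
Qed.
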